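(* An algebraic quantum hypergroup $(A,\Delta)$ is both of compact type and of discrete type if and only if $A$ is finite-dimensional.
   Context: **Standing definitions.** All algebras are over $\mathbb C$, associative, possibly without identity, with non-degenerate product. $M(A)$ denotes the multiplier algebra and $\iota$ the identity map. *Comultiplication.* A regular comultiplication is a linear map $\Delta:A\to M(A\otimes A)$, not assumed multiplicative, such that: - $\Delta(a)(1\otimes b)$, $(a\otimes1)\Delta(b)$, $\Delta(a)(b\otimes1)$ and $(1\otimes a)\Delta(b)$ lie in $A\otimes A$; - $(a\otimes1\otimes1)(\Delta\otimes\iota)(\Delta(b)(1\otimes c))=(\iota\otimes\Delta)((a\otimes1)\Delta(b))(1\otimes1\otimes c)$. *Counit.* A counit is a homomorphism $\varepsilon$ with $(\varepsilon\otimes\iota)\Delta=\iota=(\iota\otimes\varepsilon)\Delta$. *Integrals.* A left integral is a nonzero $\varphi$ with $(\iota\otimes\varphi)\Delta(a)=\varphi(a)1$ in $M(A)$. A functional is faithful if $f(ab)=0\ \forall b$ or $f(ba)=0\ \forall b$ forces $a=0$. *Antipode.* An antipode relative to a faithful left integral $\varphi$ is a bijective linear anti-homomorphism $S$ with $S((\iota\otimes\varphi)(\Delta(a)(1\otimes b)))=(\iota\otimes\varphi)((1\otimes a)\Delta(b))$. *Algebraic quantum hypergroup.* A pair $(A,\Delta)$ with a regular comultiplication admitting a counit $\varepsilon$, a faithful left integral $\varphi$ and an antipode $S$ relative to $\varphi$. **Types.** - $(A,\Delta)$ is of *compact type* if $A$ has an identity. - A *left co-integral* is a nonzero $h\in A$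 with $ah=\varepsilon(a)h$ for all $a\in A$. - $(A,\Delta)$ is of *discrete type* if a left co-integral exists. *)

From HB Require Import structures.
From mathcomp Require Import all_boot all_order all_algebra.
From mathcomp Require Import reals complex.
Set Implicit Arguments. Unset Strict Implicit. Unset Printing Implicit Defensive.
Import Order.TTheory GRing.Theory Num.Theory.
Local Open Scope ring_scope.

Section AQH.
Variables (K : fieldType) (A : lmodType K) (mul : A -> A -> A).

Definition is_nalg : Prop :=
  [/\ associative mul,
      (forall k a b c, mul (k *: a + b) c = k *: mul a c + mul b c),
      (forall k a b c, mul a (k *: b + c) = k *: mul a b + mul a c),
      (forall a, (forall b, mul a b = 0) -> a = 0) &
      (forall a, (forall b, mul b a = 0) -> a = 0)].

Definition lfun (f : A -> K) : Prop :=
  forall c x y, f (c *: x + y) = c * f x + f y.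

(* Tensors: an element of A (x) A is represented by a finite list of
   pairs (a_i,b_i) standing for sum_i a_i (x) b_i; two lists represent
   the same tensor iff they agree against all f (x) g, f, g linear
   functionals (algebraic duals separate points of tensor products). *)
Definition tens2 := seq (A * A).
Definition tens3 := seq (A * A * A).

Definition ev2 (f g : A -> K) (s : tens2) : K :=
  \sum_(p <- s) f p.1 * g p.2.
Definition ev3 (f g h : A -> K) (s : tens3) : K :=
  \sum_(p <- s) f p.1.1 * g p.1.2 * h p.2.

Definition teq2 (s t : tens2) : Prop :=
  forall f g, lfun f -> lfun g -> ev2 f g s = ev2 f g t.
Definition teq3 (s t : tens3) : Prop :=
  forall f g h, lfun f -> lfun g -> lfun h -> ev3 f g h s = ev3 f g h t.

Definition tscale2 (c : K) (s : tens2) : tens2 := [seq (c *: p.1, p.2) | p <- s].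
Definition tscale3 (c : K) (s : tens3) : tens3 :=
  [seq (c *: p.1.1, p.1.2, p.2) | p <- s].

Definition tmul2 (s t : tens2) : tens2 :=
  [seq (mul p.1 q.1, mul p.2 q.2) | p <- s, q <- t].

(* Multipliers of a (tensor) algebra: pairs (lambda, rho) of maps,
   m x := lambda x,  x m := rho x. *)
Definition mult (T : Type) := ((T -> T) * (T -> T))%type.
Definition mmul (T : Type) (m n : mult T) : mult T :=
  (fun x => m.1 (n.1 x), fun x => n.2 (m.2 x)).
Definition meq (T : Type) (eqT : T -> T -> Prop) (m n : mult T) : Prop :=
  forall x, eqT (m.1 x) (n.1 x) /\ eqT (m.2 x) (n.2 x).
Definition meq2 := @meq tens2 teq2.
Definition meq3 := @meq tens3 teq3.

Definition emb2 (t : tens2) : mult tens2 := (fun s => tmul2 t s, fun s => tmul2 s t).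
(* a (x) 1 and 1 (x) a in M(A (x) A) *)
Definition l2 (a : A) : mult tens2 :=
  (fun s => [seq (mul a p.1, p.2) | p <- s], fun s => [seq (mul p.1 a, p.2) | p <- s]).
Definition r2 (a : A) : mult tens2 :=
  (fun s => [seq (p.1, mul a p.2) | p <- s], fun s => [seq (p.1, mul p.2 a) | p <- s]).
(* a (x) 1 (x) 1 and 1 (x) 1 (x) a in M(A (x) A (x) A) *)
Definition l3 (a : A) : mult tens3 :=
  (fun s => [seq (mul a p.1.1, p.1.2, p.2) | p <- s],
   fun s => [seq (mul p.1.1 a, p.1.2, p.2) | p <- s]).
Definition r3 (a : A) : mult tens3 :=
  (fun s => [seq (p.1.1, p.1.2, mul a p.2) | p <- s],
   fun s => [seq (p.1.1, p.1.2, mul p.2 a) | p <- s]).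

Definition is_mult2 (m : mult tens2) : Prop :=
  [/\ (forall s s', teq2 s s' -> teq2 (m.1 s) (m.1 s') /\ teq2 (m.2 s) (m.2 s')),
      (forall c s t, teq2 (m.1 (tscale2 c s ++ t)) (tscale2 c (m.1 s) ++ m.1 t)),
      (forall c s t, teq2 (m.2 (tscale2 c s ++ t)) (tscale2 c (m.2 s) ++ m.2 t)) &
      (forall x y, teq2 (tmul2 x (m.1 y)) (tmul2 (m.2 x) y))].

Definition in_tens2 (m : mult tens2) : Prop := exists t, meq2 m (emb2 t).

Section Comult.
Variable D : A -> mult tens2.

(* (Delta (x) iota)(t) and (iota (x) Delta)(t) in M(A (x) A (x) A), t in A (x) A *)
Definition DeltaI (t : tens2) : mult tens3 :=
  (fun z => flatten [seq [seq (u.1, u.2, mul p.2 q.2) | u <- (D p.1).1 [:: (q.1.1, q.1.2)]]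
                    | p <- t, q <- z],
   fun z => flatten [seq [seq (u.1, u.2, mul q.2 p.2) | u <- (D p.1).2 [:: (q.1.1, q.1.2)]]
                    | p <- t, q <- z]).
Definition IDelta (t : tens2) : mult tens3 :=
  (fun z => flatten [seq [seq (mul p.1 q.1.1, u.1, u.2) | u <- (D p.2).1 [:: (q.1.2, q.2)]]
                    | p <- t, q <- z],
   fun z => flatten [seq [seq (mul q.1.1 p.1, u.1, u.2) | u <- (D p.2).2 [:: (q.1.2, q.2)]]
                    | p <- t, q <- z]).

Definition regular_comult : Prop :=
  [/\ (forall a, is_mult2 (D a)),
      (forall c a b, meq2 (D (c *: a + b))
          (fun s => tscale2 c ((D a).1 s) ++ (D b).1 s,
           fun s => tscale2 c ((D a).2 s) ++ (D b).2 s)),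
      (forall a b, [/\ in_tens2 (mmul (D a) (r2 b)), in_tens2 (mmul (l2 a) (D b)),
                       in_tens2 (mmul (D a) (l2 b)) & in_tens2 (mmul (r2 a) (D b))]) &
      (* coassociativity:
         (a(x)1(x)1)(Delta(x)iota)(Delta(b)(1(x)c))
           = (iota(x)Delta)((a(x)1)Delta(b))(1(x)1(x)c) *)
      (forall a b c t u, meq2 (mmul (D b) (r2 c)) (emb2 t) ->
          meq2 (mmul (l2 a) (D b)) (emb2 u) ->
          meq3 (mmul (l3 a) (DeltaI t)) (mmul (IDelta u) (r3 c)))].

Definition sliceL (f : A -> K) (t : tens2) : A := \sum_(p <- t) f p.1 *: p.2.
Definition sliceR (f : A -> K) (t : tens2) : A := \sum_(p <- t) f p.2 *: p.1.

(* counit: homomorphism eps with (eps(x)iota)Delta = iota = (iota(x)eps)Delta,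
   as multipliers of A *)
Definition counit (eps : A -> K) : Prop :=
  [/\ lfun eps /\ (forall a b, eps (mul a b) = eps a * eps b),
      (forall a b t, meq2 (mmul (D a) (r2 b)) (emb2 t) -> sliceL eps t = mul a b),
      (forall a b t, meq2 (mmul (r2 b) (D a)) (emb2 t) -> sliceL eps t = mul b a),
      (forall a b t, meq2 (mmul (D a) (l2 b)) (emb2 t) -> sliceR eps t = mul a b) &
      (forall a b t, meq2 (mmul (l2 b) (D a)) (emb2 t) -> sliceR eps t = mul b a)].

(* left integral: nonzero functional with (iota(x)phi)Delta(a) = phi(a)1 in M(A) *)
Definition left_integral (phi : A -> K) : Prop :=
  [/\ lfun phi, (exists a, phi a != 0),
      (forall a b t, meq2 (mmul (D a) (l2 b)) (emb2 t) -> sliceR phi t = phi a *: b) &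
      (forall a b t, meq2 (mmul (l2 b) (D a)) (emb2 t) -> sliceR phi t = phi a *: b)].

Definition faithful (phi : A -> K) : Prop :=
  forall a, ((forall b, phi (mul a b) = 0) \/ (forall b, phi (mul b a) = 0)) -> a = 0.

Definition antipode (phi : A -> K) (S : A -> A) : Prop :=
  [/\ bijective S, (forall c a b, S (c *: a + b) = c *: S a + S b),
      (forall a b, S (mul a b) = mul (S b) (S a)) &
      (forall a b t u, meq2 (mmul (D a) (r2 b)) (emb2 t) ->
          meq2 (mmul (r2 a) (D b)) (emb2 u) ->
          S (sliceR phi t) = sliceR phi u)].

Definition AQH (eps : A -> K) : Prop :=
  [/\ is_nalg, regular_comult, counit eps &
      exists phi S, [/\ left_integral phi, faithful phi & antipode phi S]].

Definition compact_type : Prop := exists e, forall a, mul e a = a /\ mul a e = a.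

Definition left_cointegral (eps : A -> K) (h : A) : Prop :=
  h != 0 /\ forall a, mul a h = eps a *: h.

Definition discrete_type (eps : A -> K) : Prop := exists h, left_cointegral eps h.

End Comult.

Definition finite_dim : Prop :=
  exists s : seq A, forall a, exists c : nat -> K, a = \sum_(i < size s) c i *: s`_i.

End AQH.

From HB Require Import structures.
From mathcomp Require Import all_boot all_order all_algebra.
From mathcomp Require Import reals complex.
Set Implicit Arguments. Unset Strict Implicit. Unset Printing Implicit Defensive.
Import GRing.Theory Num.Theory.
Local Open Scope ring_scope.

(* If A has a unit, Delta(a) is an honest tensor a_(1) (x) a_(2), and for a
   left cointegral h the legs of Delta(a)(1 (x) h) are a_(1) and
   eps(a_(2)) h.  The antipode relation for b = h therefore reads
   phi(h) S(a) = sum phi(a h_(2)) h_(1); as phi(h) <> 0 by faithfulness and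
   S is onto, the first legs h_(1) of Delta(h) span A.
   Conversely, if A is finite-dimensional, the faithful pairing
   (x, y) |-> phi(x y) identifies A with its dual on either side: writing
   phi = phi(e .) = phi(. e') gives a two-sided unit, and writing
   eps = phi(. h) gives a left cointegral, because
   phi(b a h) = eps(b) eps(a) = phi(b eps(a) h). *)

Section LinearFunctionals.
Variables (K : fieldType) (A : lmodType K).
Implicit Types (f : A -> K) (x y : A).

Lemma lfunB {f} : lfun f -> forall x y, f (x - y) = f x - f y.
Proof. exact: zmod_morphism_linear. Qed.

Lemma lfun0 {f} : lfun f -> f 0 = 0.
Proof. by move=> lf; rewrite -(subrr 0) (lfunB lf) subrr. Qed.

Lemma lfunZ {f} : lfun f -> forall c x, f (c *: x) = c * f x.
Proof. exact: scalable_linear. Qed.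

Lemma lfun_sum {f} : lfun f -> forall (I : Type) (r : seq I) (c : I -> K) (v : I -> A),
  f (\sum_(i <- r) c i *: v i) = \sum_(i <- r) c i * f (v i).
Proof.
move=> lf I r c v; rewrite (big_morph f (GRing.semilinear_linear lf).2 (lfun0 lf)).
by apply: eq_bigr => i _; rewrite (lfunZ lf).
Qed.

Lemma lfun_comp f (g : A -> A) : lfun f -> linear g -> lfun (fun x => f (g x)).
Proof. by move=> lf lg c x y; rewrite /= lg lf. Qed.

Lemma span_first_legs (t : tens2 A) (c : A * A -> K) :
  exists d : nat -> K,
    \sum_(p <- t) c p *: p.1 = \sum_(i < size [seq p.1 | p <- t]) d i *: [seq p.1 | p <- t]`_i.
Proof.
exists (fun i => c (nth (0, 0) t i)); rewrite size_map (big_nth (0, 0)) big_mkord.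
by apply: eq_bigr => i _; rewrite (nth_map (0, 0)).
Qed.

End LinearFunctionals.

Section FiniteDimRepresentation.
Variables (K : fieldType) (A : lmodType K) (s : seq A).
Hypothesis s_span : forall a, exists c : nat -> K, a = \sum_(i < size s) c i *: s`_i.

Lemma lfun_span_eq (f g : A -> K) : lfun f -> lfun g ->
  (forall i : 'I_(size s), f s`_i = g s`_i) -> f =1 g.
Proof.
move=> lf lg fg a; have [c ->] := s_span a.
by rewrite (lfun_sum lf) (lfun_sum lg); apply: eq_bigr => i _; rewrite fg.
Qed.

Variable B : A -> A -> K.
Hypotheses (B_lfunl : forall y, lfun (B^~ y)) (B_lfunr : forall x, lfun (B x)).
Hypothesis B_nondeg : forall x, (forall y, B x y = 0) -> x = 0.

Lemma form_represents_lfun (w : A -> K) : lfun w -> exists x, forall y, B y x = w y.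
Proof.
move=> lw; pose n := size s.
pose N : 'M[K]_n := \matrix_(i, j) B s`_j s`_i.
pose r : 'rV[K]_n := \row_j w s`_j.
(* r lies in the row space of N as soon as every column relation of N is one of
   r; a column relation of N is a combination of s annihilated by B. *)
have ker_N p (d : 'M_(n, p)) : N *m d = 0 -> r *m d = 0.
  move=> Nd0; apply/matrixP => i k; pose a := \sum_(j < n) d j k *: s`_j.
  have a0 : a = 0.
    apply: B_nondeg; apply: (@lfun_span_eq _ (fun=> 0) (B_lfunr a)) => [c x y|j].
      by rewrite mulr0 addr0.
    have /matrixP/(_ j k) := Nd0; rewrite !mxE => <-; rewrite /a (lfun_sum (B_lfunl _)).
    by apply: eq_bigr => l _; rewrite mxE mulrC.
  rewrite !mxE; transitivity (w a); last by rewrite a0 (lfun0 lw).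
  by rewrite (lfun_sum lw); apply: eq_bigr => j _; rewrite mxE mulrC.
have /submxP [x rxN] : (r <= N)%MS by rewrite submxE ker_N ?mulmx_coker.
exists (\sum_(i < n) x 0 i *: s`_i) => y.
apply: (lfun_span_eq (B_lfunl _) lw) => j.
have /matrixP/(_ 0 j) := rxN; rewrite !mxE (lfun_sum (B_lfunr _)) => ->.
by apply: eq_bigr => i _; rewrite mxE.
Qed.

End FiniteDimRepresentation.

Section TensorEquality.
Variables (K : fieldType) (A : lmodType K).

Lemma teq2_sym (s t : tens2 A) : teq2 s t -> teq2 t s.
Proof. by move=> st f g lf lg; rewrite st. Qed.

Lemma teq2_trans (s t u : tens2 A) : teq2 s t -> teq2 t u -> teq2 s u.
Proof. by move=> st tu f g lf lg; rewrite st // tu. Qed.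

Lemma meq2_sym (m n : mult (tens2 A)) : meq2 m n -> meq2 n m.
Proof. by move=> mn x; have [? ?] := mn x; split; apply: teq2_sym. Qed.

Lemma meq2_trans (m n o : mult (tens2 A)) : meq2 m n -> meq2 n o -> meq2 m o.
Proof.
move=> mn no x; have [? ?] := mn x; have [? ?] := no x.
by split; apply: teq2_trans; eassumption.
Qed.

End TensorEquality.

Section Multipliers.
Variables (K : fieldType) (A : lmodType K) (mul : A -> A -> A).
Hypothesis mulA : associative mul.
Hypotheses (mul_linear_l : forall b, linear (mul^~ b)) (mul_linear_r : forall a, linear (mul a)).

Lemma r2_teq2 a (s s' : tens2 A) : teq2 s s' ->
  teq2 ((r2 mul a).1 s) ((r2 mul a).1 s') /\ teq2 ((r2 mul a).2 s) ((r2 mul a).2 s').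
Proof.
move=> ss'; split=> f g lf lg; rewrite /ev2 /= !big_map.
  exact: ss' _ _ lf (lfun_comp lg (mul_linear_r a)).
exact: ss' _ _ lf (lfun_comp lg (mul_linear_l a)).
Qed.

Lemma mmul_emb2_r2 m t b : meq2 m (emb2 mul t) ->
  meq2 (mmul m (r2 mul b)) (emb2 mul ((r2 mul b).2 t)).
Proof.
move=> mt x; have [mt1 _] := mt ((r2 mul b).1 x); have [_ mt2] := mt x; split=> /=.
  suff -> : tmul2 mul [seq (p.1, mul p.2 b) | p <- t] x =
            tmul2 mul t [seq (p.1, mul b p.2) | p <- x] by exact: mt1.
  by rewrite /tmul2 allpairs_mapl allpairs_mapr; apply: eq_allpairs => p q /=; rewrite mulA.
suff -> : tmul2 mul x [seq (p.1, mul p.2 b) | p <- t] =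
          [seq (p.1, mul p.2 b) | p <- tmul2 mul x t] by exact: (r2_teq2 b mt2).2.
by rewrite /tmul2 map_allpairs allpairs_mapr; apply: eq_allpairs => p q /=; rewrite mulA.
Qed.

Lemma mmul_r2_emb2 m t a : meq2 m (emb2 mul t) ->
  meq2 (mmul (r2 mul a) m) (emb2 mul ((r2 mul a).1 t)).
Proof.
move=> mt x; have [mt1 _] := mt x; have [_ mt2] := mt ((r2 mul a).2 x); split=> /=.
  suff -> : tmul2 mul [seq (p.1, mul a p.2) | p <- t] x =
            [seq (p.1, mul a p.2) | p <- tmul2 mul t x] by exact: (r2_teq2 a mt1).1.
  by rewrite /tmul2 map_allpairs allpairs_mapl; apply: eq_allpairs => p q /=; rewrite mulA.
suff -> : tmul2 mul x [seq (p.1, mul a p.2) | p <- t] =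
          tmul2 mul [seq (p.1, mul p.2 a) | p <- x] t by exact: mt2.
by rewrite /tmul2 allpairs_mapl allpairs_mapr; apply: eq_allpairs => p q /=; rewrite mulA.
Qed.

End Multipliers.

Section Unital.
Variables (K : fieldType) (A : lmodType K) (mul : A -> A -> A) (e : A).
Hypothesis e_unit : forall a, mul e a = a /\ mul a e = a.

Lemma mmul_r2_unit (m : mult (tens2 A)) : meq2 (mmul m (r2 mul e)) m.
Proof.
have r2e s : (r2 mul e).1 s = s /\ (r2 mul e).2 s = s.
  by split; apply: map_id_in => -[x y] _ /=; rewrite ?(e_unit y).1 ?(e_unit y).2.
by move=> x; cbn [mmul fst snd]; have [-> _] := r2e x; have [_ ->] := r2e (m.2 x).
Qed.

Lemma mmul_l2_unit (m : mult (tens2 A)) : meq2 (mmul m (l2 mul e)) m.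
Proof.
have l2e s : (l2 mul e).1 s = s /\ (l2 mul e).2 s = s.
  by split; apply: map_id_in => -[x y] _ /=; rewrite ?(e_unit x).1 ?(e_unit x).2.
by move=> x; cbn [mmul fst snd]; have [-> _] := l2e x; have [_ ->] := l2e (m.2 x).
Qed.

Lemma unital_in_tens2 (m : mult (tens2 A)) :
  in_tens2 mul (mmul m (r2 mul e)) -> in_tens2 mul m.
Proof. by case=> t mt; exists t; apply: meq2_trans (meq2_sym (mmul_r2_unit m)) mt. Qed.

End Unital.

Section FaithfulFunctional.
Variables (K : fieldType) (A : lmodType K) (mul : A -> A -> A) (phi : A -> K).
Hypothesis mulA : associative mul.
Hypotheses (mul_linear_l : forall b, linear (mul^~ b)) (mul_linear_r : forall a, linear (mul a)).
Hypotheses (phi_lfun : lfun phi) (phi_faithful : faithful mul phi).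

Lemma faithful_mulr_inj x y : (forall b, phi (mul b x) = phi (mul b y)) -> x = y.
Proof.
move=> xy; apply/eqP; rewrite -subr_eq0; apply/eqP/phi_faithful; right=> b.
by rewrite (lfunB (lfun_comp phi_lfun (mul_linear_r b))) xy subrr.
Qed.

Lemma faithful_mull_inj x y : (forall b, phi (mul x b) = phi (mul y b)) -> x = y.
Proof.
move=> xy; apply/eqP; rewrite -subr_eq0; apply/eqP/phi_faithful; left=> b.
by rewrite (lfunB (lfun_comp phi_lfun (mul_linear_l b))) xy subrr.
Qed.

Lemma faithful_cointegral_neq0 eps h (h_cointegral : left_cointegral mul eps h) :
  phi h != 0.
Proof.
case: h_cointegral => h_neq0 hP; apply: contra_neq h_neq0 => phih0.
by apply: phi_faithful; right=> b; rewrite hP (lfunZ phi_lfun) phih0 mulr0.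
Qed.

Section FiniteDim.
Hypothesis A_fin : finite_dim A.

Lemma faithful_representsr (w : A -> K) : lfun w -> exists x, forall y, phi (mul y x) = w y.
Proof.
case: A_fin => s s_span; apply: (@form_represents_lfun _ _ _ s_span (fun x y => phi (mul x y))).
- by move=> y; exact: lfun_comp phi_lfun (mul_linear_l y).
- by move=> x; exact: lfun_comp phi_lfun (mul_linear_r x).
- by move=> x x0; apply: phi_faithful; left.
Qed.

Lemma faithful_representsl (w : A -> K) : lfun w -> exists x, forall y, phi (mul x y) = w y.
Proof.
case: A_fin => s s_span; apply: (@form_represents_lfun _ _ _ s_span (fun x y => phi (mul y x))).
- by move=> y; exact: lfun_comp phi_lfun (mul_linear_r y).
- by move=> x; exact: lfun_comp phi_lfun (mul_linear_l x).
- by move=> x x0; apply: phi_faithful; right.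
Qed.

Lemma finite_dim_compact : compact_type mul.
Proof.
have [eR eRP] := faithful_representsr phi_lfun.
have [eL eLP] := faithful_representsl phi_lfun.
have eR_unit a : mul a eR = a by apply: faithful_mulr_inj => b; rewrite mulA eRP.
have eL_unit a : mul eL a = a by apply: faithful_mull_inj => b; rewrite -mulA eLP.
have eLR : eL = eR by rewrite -[RHS]eL_unit eR_unit.
by exists eR => a; rewrite -{1}eLR.
Qed.

Lemma finite_dim_discrete eps : lfun eps -> (forall a b, eps (mul a b) = eps a * eps b) ->
  ~ (forall a, eps a = 0) -> discrete_type mul eps.
Proof.
move=> eps_lfun eps_mul eps_neq0; have [h hP] := faithful_representsr eps_lfun.
exists h; split.
  apply/eqP => h0; apply: eps_neq0 => a.
  by rewrite -hP h0 (lfun0 (lfun_comp phi_lfun (mul_linear_r a))).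
move=> a; apply: faithful_mulr_inj => b.
by rewrite mulA hP eps_mul (lfunZ (lfun_comp phi_lfun (mul_linear_r b))) hP mulrC.
Qed.

End FiniteDim.
End FaithfulFunctional.

Section Counit.
Variables (K : fieldType) (A : lmodType K) (mul : A -> A -> A).
Variables (D : A -> mult (tens2 A)) (eps : A -> K).
Hypothesis D_regular : forall a b, in_tens2 mul (mmul (D a) (r2 mul b)).
Hypothesis eps_counit : counit mul D eps.

Lemma counit_eq0_mul : (forall x, eps x = 0) -> forall a b, mul a b = 0.
Proof.
move=> eps0 a b; have [t Dt] := D_regular a b; case: eps_counit => _ eps_sliceL _ _ _.
by rewrite -(eps_sliceL _ _ _ Dt) /sliceL big1 // => p _; rewrite eps0 scale0r.
Qed.

Section CompactDiscrete.
Variables (phi : A -> K) (S : A -> A) (e h : A).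
Hypothesis mulA : associative mul.
Hypotheses (mul_linear_l : forall b, linear (mul^~ b)) (mul_linear_r : forall a, linear (mul a)).
Hypotheses (phi_lfun : lfun phi) (phi_faithful : faithful mul phi).
Hypothesis S_antipode : antipode mul D phi S.
Hypotheses (e_unit : forall a, mul e a = a /\ mul a e = a) (h_cointegral : left_cointegral mul eps h).

Lemma unital_D_in_tens2 a : in_tens2 mul (D a).
Proof. exact: unital_in_tens2 e_unit _ (D_regular a e). Qed.

Lemma unital_counit_sliceR a t : meq2 (D a) (emb2 mul t) -> sliceR eps t = a.
Proof.
case: eps_counit => _ _ _ eps_sliceR _ Dt; rewrite -[RHS](e_unit a).2.
exact/eps_sliceR/(meq2_trans (mmul_l2_unit e_unit _) Dt).
Qed.

Lemma sliceR_cointegral t : sliceR phi ((r2 mul h).2 t) = phi h *: sliceR eps t.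
Proof.
rewrite /sliceR big_map scaler_sumr; apply: eq_bigr => p _ /=.
by rewrite h_cointegral.2 (lfunZ phi_lfun) scalerA mulrC.
Qed.

Lemma antipode_cointegral a th : meq2 (D h) (emb2 mul th) ->
  phi h *: S a = sliceR phi ((r2 mul a).1 th).
Proof.
move=> Dh; have [t Dt] := unital_D_in_tens2 a; case: S_antipode => _ S_linear _ S_slice.
have -> : phi h *: S a = S (sliceR phi ((r2 mul h).2 t)).
  by rewrite sliceR_cointegral (unital_counit_sliceR Dt) (scalable_linear S_linear).
exact: S_slice (mmul_emb2_r2 mulA mul_linear_l mul_linear_r h Dt)
               (mmul_r2_emb2 mulA mul_linear_l mul_linear_r a Dh).
Qed.

Lemma compact_discrete_finite_dim : finite_dim A.
Proof.
have phih := faithful_cointegral_neq0 phi_lfun phi_faithful h_cointegral.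
have [th Dh] := unital_D_in_tens2 h.
exists [seq p.1 | p <- th] => y; case: S_antipode => -[Sinv _ SinvK] _ _ _.
have [d sum_d] := span_first_legs th (fun p => (phi h)^-1 * phi (mul (Sinv y) p.2)).
exists d; rewrite -sum_d.
transitivity ((phi h)^-1 *: sliceR phi ((r2 mul (Sinv y)).1 th)).
  by rewrite -(antipode_cointegral _ Dh) SinvK scalerA mulVf // scale1r.
by rewrite /sliceR /= big_map scaler_sumr; apply: eq_bigr => p _; rewrite scalerA.
Qed.

End CompactDiscrete.
End Counit.

Theorem mainTheorem18 (R : realType) (A : lmodType R[i]) (mul : A -> A -> A)
    (D : A -> mult (tens2 A)) (eps : A -> R[i]) :
  AQH mul D eps ->
  (compact_type mul /\ discrete_type mul eps <-> finite_dim A).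
Proof.
case=> -[mulA mulDl mulDr mul_nondeg _] [_ _ D_regular _] eps_counit.
case=> phi [S [[phi_lfun [a0 phia0] _ _] phi_faithful S_antipode]].
have mul_linear_l b : linear (mul^~ b) by move=> k a c; exact: mulDl.
have mul_linear_r a : linear (mul a) by move=> k b c; exact: mulDr.
have {}D_regular a b : in_tens2 mul (mmul (D a) (r2 mul b)) by case: (D_regular a b).
split=> [[[e e_unit] [h h_cointegral]] | A_fin].
  exact: (compact_discrete_finite_dim D_regular eps_counit mulA mul_linear_l mul_linear_r
            phi_lfun phi_faithful S_antipode e_unit h_cointegral).
split; first exact: (finite_dim_compact mulA mul_linear_l mul_linear_r phi_lfun phi_faithful A_fin).
have [[eps_lfun eps_mul] _ _ _ _] := eps_counit.
apply: (finite_dim_discrete mulA mul_linear_l mul_linear_r phi_lfun phi_faithful A_fin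
          eps_lfun eps_mul) => eps0.
move/eqP: phia0; apply; suff -> : a0 = 0 by exact: lfun0 phi_lfun.
by apply: mul_nondeg => b; exact: counit_eq0_mul D_regular eps_counit eps0 a0 b.
Qed.
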